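(* Let $(\mathfrak{g},[\cdot,\cdot]_{\mathfrak{g}})$ be a Leibniz algebra, $(V;\rho^L,\rho^R)$ a representation, and $T:V\to\mathfrak{g}$ a relative Rota-Baxter operator. Define $\bar\rho^L,\bar\rho^R:V\to\mathfrak{gl}(\mathfrak{g})$ by $\bar\rho^L(u)x=[Tu,x]_{\mathfrak{g}}-T\rho^R(x)u$ and $\bar\rho^R(u)x=[x,Tu]_{\mathfrak{g}}-T\rho^L(x)u$ for $u\in V$, $x\in\mathfrak{g}$. Then $(\mathfrak{g};\bar\rho^L,\bar\rho^R)$ is a representation of the Leibniz algebra $(V,[\cdot,\cdot]_T)$, where $[u,v]_T=\rho^L(Tu)v+\rho^R(Tv)u$.
   Context: A Leibniz algebra is a vector space $\mathfrak{g}$ with bilinear $[\cdot,\cdot]_{\mathfrak{g}}$ satisfying $[x,[y,z]_{\mathfrak{g}}]_{\mathfrak{g}}=[[x,y]_{\mathfrak{g}},z]_{\mathfrak{g}}+[y,[x,z]_{\mathfrak{g}}]_{\mathfrak{g}}$. A representation $(W;\sigma^L,\sigma^R)$ of a Leibniz algebra $(\mathfrak{h},[\cdot,\cdot]_{\mathfrak{h}})$ is a vector space $W$ with linear maps $\sigma^L,\sigma^R:\mathfrak{h}\to\mathfrak{gl}(W)$ such that $\sigma^L([x,y]_{\mathfrak{h}})=[\sigma^L(x),\sigma^L(y)]$, $\sigma^R([x,y]_{\mathfrak{h}})=[\sigma^L(x),\sigma^R(y)]$, $\sigma^R(y)\sigma^L(x)=-\sigma^R(y)\sigma^R(x)$ for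 all $x,y\in\mathfrak{h}$ (commutators in $\mathfrak{gl}(W)$). A relative Rota-Baxter operator on $\mathfrak{g}$ with respect to a representation $(V;\rho^L,\rho^R)$ is a linear $T:V\to\mathfrak{g}$ with $[Tv_1,Tv_2]_{\mathfrak{g}}=T(\rho^L(Tv_1)v_2+\rho^R(Tv_2)v_1)$; then $(V,[\cdot,\cdot]_T)$ is a Leibniz algebra. *)

From HB Require Import structures.
From mathcomp Require Import all_boot all_algebra.
Set Implicit Arguments. Unset Strict Implicit. Unset Printing Implicit Defensive.
Import GRing.Theory.
Local Open Scope ring_scope.

Definition is_lin (K : fieldType) (U W : lmodType K) (f : U -> W) : Prop :=
  forall (a : K) (u v : U), f (a *: u + v) = a *: f u + f v.

Definition is_bilinear (K : fieldType) (g : lmodType K) (br : g -> g -> g) : Prop :=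
  (forall x, is_lin (br x)) /\ (forall y, is_lin (fun x => br x y)).

Definition leibniz_algebra (K : fieldType) (g : lmodType K) (br : g -> g -> g) : Prop :=
  is_bilinear br /\
  forall x y z, br x (br y z) = br (br x y) z + br y (br x z).

Definition is_lin_to_gl (K : fieldType) (h W : lmodType K) (s : h -> W -> W) : Prop :=
  (forall x, is_lin (s x)) /\ (forall w, is_lin (fun x => s x w)).

Definition is_representation (K : fieldType) (h W : lmodType K)
  (br : h -> h -> h) (sL sR : h -> W -> W) : Prop :=
  [/\ is_lin_to_gl sL, is_lin_to_gl sR,
      (forall x y w, sL (br x y) w = sL x (sL y w) - sL y (sL x w)),
      (forall x y w, sR (br x y) w = sL x (sR y w) - sR y (sL x w)) &
      (forall x y w, sR y (sL x w) = - sR y (sR x w))].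

Definition is_relative_RB (K : fieldType) (g V : lmodType K)
  (br : g -> g -> g) (rhoL rhoR : g -> V -> V) (T : V -> g) : Prop :=
  is_lin T /\
  forall v1 v2, br (T v1) (T v2) = T (rhoL (T v1) v2 + rhoR (T v2) v1).

Definition bracket_T (K : fieldType) (g V : lmodType K)
  (rhoL rhoR : g -> V -> V) (T : V -> g) : V -> V -> V :=
  fun u v => rhoL (T u) v + rhoR (T v) u.

Definition bar_rhoL (K : fieldType) (g V : lmodType K)
  (br : g -> g -> g) (rhoR : g -> V -> V) (T : V -> g) : V -> g -> g :=
  fun u x => br (T u) x - T (rhoR x u).

Definition bar_rhoR (K : fieldType) (g V : lmodType K)
  (br : g -> g -> g) (rhoL : g -> V -> V) (T : V -> g) : V -> g -> g :=
  fun u x => br x (T u) - T (rhoL x u).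

From mathcomp Require Import all_boot all_algebra.
Set Implicit Arguments. Unset Strict Implicit.
Import GRing.Theory.
Local Open Scope ring_scope.

(* T is a relative Rota-Baxter operator exactly when its graph
   {(Tu, u)} is a subalgebra of the semidirect product g ⋉ V.  For any
   subalgebra A of a Leibniz algebra L, the adjoint action of A on L
   descends to a representation of A on L/A.  Here L/A is identified with g
   through the projection (x, v) |-> x - Tv, and the induced actions of
   u ≅ (Tu, u) on x ≅ (x, 0) are exactly bar rhoL and bar rhoR. *)

Section Linearity.
Variables (K : fieldType) (U W X : lmodType K).

Lemma is_linD (f : U -> W) : is_lin f -> forall u v, f (u + v) = f u + f v.
Proof. by move=> linf u v; have := linf 1 u v; rewrite !scale1r. Qed.

Lemma is_lin0 (f : U -> W) : is_lin f -> f 0 = 0.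
Proof. by move=> linf; apply: (@addrI _ (f 0)); rewrite -is_linD // !addr0. Qed.

Lemma is_linN (f : U -> W) : is_lin f -> forall u, f (- u) = - f u.
Proof.
by move=> linf u; apply: (@addrI _ (f u)); rewrite -is_linD // !subrr is_lin0.
Qed.

Lemma is_linB (f : U -> W) : is_lin f -> forall u v, f (u - v) = f u - f v.
Proof. by move=> linf u v; rewrite is_linD // is_linN. Qed.

Lemma is_lin_comp (f : W -> X) (h : U -> W) :
  is_lin f -> is_lin h -> is_lin (fun u => f (h u)).
Proof. by move=> linf linh a u v; rewrite linh linf. Qed.

Lemma is_lin_sub (f h : U -> W) :
  is_lin f -> is_lin h -> is_lin (fun u => f u - h u).
Proof.
by move=> linf linh a u v; rewrite linf linh scalerBr opprD addrACA.
Qed.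

Lemma eq_is_lin (f h : U -> W) : f =1 h -> is_lin f -> is_lin h.
Proof. by move=> eq_fh linf a u v; rewrite -!eq_fh. Qed.

End Linearity.

Section LeibnizAlgebra.
Variables (K : fieldType) (L : lmodType K) (br : L -> L -> L).
Hypothesis leibL : leibniz_algebra br.

Lemma leibniz_brl x y z : br (br x y) z = br x (br y z) - br y (br x z).
Proof. by case: leibL => _ leib; rewrite leib addrK. Qed.

Lemma leibniz_brlC x y z : br (br x y) z = - br (br y x) z.
Proof. by rewrite !leibniz_brl opprB. Qed.

End LeibnizAlgebra.

Section ComplementRepresentation.
Variables (K : fieldType) (L h W : lmodType K).
Variables (brL : L -> L -> L) (brh : h -> h -> h).
Variables (iota : h -> L) (j : W -> L) (pi : L -> W).
Hypothesis leibL : leibniz_algebra brL.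
Hypotheses (lin_iota : is_lin iota) (lin_j : is_lin j) (lin_pi : is_lin pi).
Hypothesis iota_br : forall a b, iota (brh a b) = brL (iota a) (iota b).
Hypothesis pi_j : forall w, pi (j w) = w.
Hypothesis pi_iota : forall a, pi (iota a) = 0.
Hypothesis pi_eq0 : forall l, pi l = 0 -> exists b, l = iota b.

Let brL_lin : is_bilinear brL. Proof. by case: leibL. Qed.

Lemma iota_j_decomposition l : exists b, l = iota b + j (pi l).
Proof.
have [b lE] : exists b, l - j (pi l) = iota b.
  by apply: pi_eq0; rewrite is_linB // pi_j subrr.
by exists b; rewrite -lE subrK.
Qed.

Lemma pi_br_iotal a l : pi (brL (iota a) l) = pi (brL (iota a) (j (pi l))).
Proof.
have [b {1}->] := iota_j_decomposition l.
by rewrite (is_linD (brL_lin.1 _)) -iota_br is_linD // pi_iota add0r.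
Qed.

Lemma pi_br_iotar a l : pi (brL l (iota a)) = pi (brL (j (pi l)) (iota a)).
Proof.
have [b {1}->] := iota_j_decomposition l.
by rewrite (is_linD (brL_lin.2 _)) -iota_br is_linD // pi_iota add0r.
Qed.

Variables (sL sR : h -> W -> W).
Hypothesis sLE : forall a w, sL a w = pi (brL (iota a) (j w)).
Hypothesis sRE : forall a w, sR a w = pi (brL (j w) (iota a)).

Theorem complement_representation : is_representation brh sL sR.
Proof.
have [brl brr] := brL_lin.
split.
- split=> [a|w]; apply: eq_is_lin (fun _ => esym (sLE _ _)) _.
    by do 2![apply: is_lin_comp => //].
  by apply: is_lin_comp => //; exact: is_lin_comp (brr _) _.
- split=> [a|w]; apply: eq_is_lin (fun _ => esym (sRE _ _)) _.
    by apply: is_lin_comp => //; exact: is_lin_comp (brr _) _.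
  by do 2![apply: is_lin_comp => //].
- move=> a b w; rewrite !sLE -!pi_br_iotal iota_br leibniz_brl //.
  exact: is_linB.
- move=> a b w; rewrite !(sLE, sRE) -pi_br_iotal -pi_br_iotar iota_br.
  rewrite -is_linB //.
  by rewrite (leibL.2 (iota a)) addrAC subrr add0r.
- move=> a b w; rewrite !(sLE, sRE) -!pi_br_iotar leibniz_brlC //.
  exact: is_linN.
Qed.

End ComplementRepresentation.

Section Semidirect.
Variables (K : fieldType) (g V : lmodType K).
Variables (br : g -> g -> g) (rhoL rhoR : g -> V -> V).

Definition semidirect_br (p q : g * V) : g * V :=
  (br p.1 q.1, rhoL p.1 q.2 + rhoR q.1 p.2).

Lemma semidirect_leibniz :
  leibniz_algebra br -> is_representation br rhoL rhoR ->
  leibniz_algebra semidirect_br.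
Proof.
move=> [[brl brr] leib] [[rLl rLr] [rRl rRr] rL rR rRL].
split; first split.
- move=> p a q q'; apply: injective_projections => /=; first exact: brl.
  by rewrite rLl rRr scalerDr addrACA.
- move=> q a p p'; apply: injective_projections => /=; first exact: brr.
  by rewrite rLr rRl scalerDr addrACA.
move=> [x u] [y v] [z w]; apply: injective_projections => /=; first exact: leib.
rewrite !(is_linD (rLl _)) !(is_linD (rRl _)) rL !rR (rRL y z u) opprK.
by rewrite !addrA [RHS](ACl (1*7*6*4*((2*5)*(3*8)))%AC) /= addNr subrr !addr0.
Qed.

End Semidirect.

Section RotaBaxterGraph.
Variables (K : fieldType) (g V : lmodType K).
Variables (br : g -> g -> g) (rhoL rhoR : g -> V -> V) (T : V -> g).

Definition graph (u : V) : g * V := (T u, u).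

Definition graph_proj (p : g * V) : g := p.1 - T p.2.

Lemma is_lin_graph : is_lin T -> is_lin graph.
Proof.
by move=> linT a u v; apply: injective_projections => /=; rewrite ?linT.
Qed.

Lemma is_lin_graph_proj : is_lin T -> is_lin graph_proj.
Proof. by move=> linT; apply: is_lin_sub => // a p q; rewrite /= linT. Qed.

Lemma graph_projK u : graph_proj (graph u) = 0.
Proof. exact: subrr. Qed.

Lemma graph_proj_eq0 p : graph_proj p = 0 -> exists u, p = graph u.
Proof. by case: p => x u /eqP; rewrite subr_eq0 => /eqP /= ->; exists u. Qed.

Lemma graph_bracket_T :
  is_relative_RB br rhoL rhoR T ->
  forall u v, graph (bracket_T rhoL rhoR T u v) =
              semidirect_br br rhoL rhoR (graph u) (graph v).
Proof. by case=> _ RB u v; rewrite /semidirect_br /= RB. Qed.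

End RotaBaxterGraph.

Theorem theorem2p7 (K : fieldType) (g V : lmodType K)
  (br : g -> g -> g) (rhoL rhoR : g -> V -> V) (T : V -> g) :
  leibniz_algebra br ->
  is_representation br rhoL rhoR ->
  is_relative_RB br rhoL rhoR T ->
  is_representation (bracket_T rhoL rhoR T)
    (bar_rhoL br rhoR T) (bar_rhoR br rhoL T).
Proof.
move=> leib rep RB; have [linT _] := RB; have [[rLl _] [rRl _] _ _ _] := rep.
have lin_incl : is_lin (fun x : g => (x, 0 : V)).
  by move=> a x y; apply: injective_projections => //=; rewrite scaler0 addr0.
apply: (complement_representation (brL := semidirect_br br rhoL rhoR)
          (iota := graph T) (j := fun x => (x, 0)) (pi := graph_proj T)).
- exact: semidirect_leibniz.
- exact: is_lin_graph.
- exact: lin_incl.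
- exact: is_lin_graph_proj.
- exact: graph_bracket_T.
- by move=> x; rewrite /graph_proj /= (is_lin0 linT) subr0.
- exact: graph_projK.
- exact: graph_proj_eq0.
- by move=> u x; rewrite /graph_proj /= (is_lin0 (rLl _)) add0r.
- by move=> u x; rewrite /graph_proj /= (is_lin0 (rRl _)) addr0.
Qed.
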